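(* Let $m\ge0$, $n\ge1$, $1\le i\le n$ and $\varepsilon\in\{0,1\}$. There exists a digraph map $\Phi:I_{6m}^{\otimes n}\to|\sqcap^n_{i,\varepsilon}|_{2m}$ whose restriction to $|\sqcap^n_{i,\varepsilon}|_{6m}\subseteq I_{6m}^{\otimes n}$ equals the coordinatewise map $c^{2m}:|\sqcap^n_{i,\varepsilon}|_{6m}\to|\sqcap^n_{i,\varepsilon}|_{2m}$.
   Context: Digraphs: vertex sets with arrows $E\subseteq V^2$ containing the diagonal; digraph maps preserve arrows. Box product $G\otimes H$: arrow $(g,h)\to(g',h')$ iff ($g\to g'$, $h=h'$) or ($g=g'$, $h\to h'$). $I_k$ is the digraph with vertices $\{0,\dots,k\}$ and non-degenerate arrows $2a\to2a+1$ and $2b+2\to2b+1$. For $k\ge0$, $|\sqcap^n_{i,\varepsilon}|_{k}$ denotes the induced subdigraph of $I_k^{\otimes n}$ on the vertices $v=(v_1,\dots,v_n)$ such that either $v_j\in\{0,k\}$ for some $j\ne i$, or $v_i=(1-\varepsilon)k$. The map $c^{2m}:I_{6m}\to I_{2m}$ is $c^{2m}(x)=\min(\max(x-2m,0),2m)$ (a digraph map), applied coordinatewise to $I_{6m}^{\otimes n}\to I_{2m}^{\otimes n}$; it sends $|\sqcap^n_{i,\varepsilon}|_{6m}$ into $|\sqcap^n_{i,\varepsilon}|_{2m}$. *)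

From mathcomp Require Import all_boot.
Set Implicit Arguments. Unset Strict Implicit. Unset Printing Implicit Defensive.

Definition arrI (k : nat) (x y : 'I_k.+1) : bool :=
  (x == y) || (~~ odd x && ((nat_of_ord y == x.+1) || (y.+1 == nat_of_ord x))).

Definition vertI (k n : nat) := {ffun 'I_n -> 'I_k.+1}.

Definition arrBox (k n : nat) (v w : vertI k n) : Prop :=
  exists j : 'I_n, (forall l : 'I_n, l != j -> v l = w l) /\ arrI (v j) (w j).

(* The vertex set of |\sqcap^n_{i,eps}|_k (an induced subdigraph of I_k^{\otimes n}).
   eps = false means eps = 0 (so (1-eps)k = k), eps = true means eps = 1. *)
Definition inSqcap (k n : nat) (i : 'I_n) (eps : bool) (v : vertI k n) : Prop :=
  (exists j : 'I_n, j != i /\ (nat_of_ord (v j) = 0 \/ nat_of_ord (v j) = k))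
  \/ nat_of_ord (v i) = (if eps then 0 else k).

(* c^{2m} : I_{6m} -> I_{2m}, x |-> min(max(x - 2m, 0), 2m). *)
Definition c2m (m : nat) (x : 'I_(6 * m).+1) : 'I_(2 * m).+1 :=
  inord (minn (x - 2 * m) (2 * m)).

Definition c2mBox (m n : nat) (v : vertI (6 * m) n) : vertI (2 * m) n :=
  [ffun j => @c2m m (v j)].

From mathcomp Require Import all_boot zify.
Set Implicit Arguments. Unset Strict Implicit. Unset Printing Implicit Defensive.

(* The retraction keeps every coordinate l != i at c^{2m}(v_l), and pushes the
   i-th one towards the required face by an amount governed by how close the
   other coordinates of v are to the boundary of [0, 6m]: once some v_l with
   l != i is within 2m of the boundary the image is already in the box
   boundary, and the i-th coordinate is left as c^{2m}(v_i); when all of them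
   are at distance >= 2m it is sent to the face (1 - eps)2m. *)

Definition arrn (x y : nat) : bool :=
  (x == y) || (~~ odd x && ((y == x.+1) || (y.+1 == x))).

Lemma arrIE k (x y : 'I_k.+1) : arrI x y = arrn x y.
Proof. by []. Qed.

Lemma arrI_inord k a b :
  a <= k -> b <= k -> arrn a b -> arrI (inord a : 'I_k.+1) (inord b).
Proof. by move=> ak bk; rewrite arrIE !inordK. Qed.

Section ArrowsOnNat.

Variables a b : nat.
Hypothesis ab : arrn a b.

Lemma arrn_minl c : arrn (minn a c) (minn b c).
Proof. move: ab; rewrite /arrn; lia. Qed.

Lemma arrn_minr c : arrn (minn c a) (minn c b).
Proof. move: ab; rewrite /arrn; lia. Qed.

Lemma arrn_maxl c : arrn (maxn a c) (maxn b c).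
Proof. move: ab; rewrite /arrn; lia. Qed.

Lemma arrn_maxr c : arrn (maxn c a) (maxn c b).
Proof. move: ab; rewrite /arrn; lia. Qed.

Lemma arrn_subl k : ~~ odd k -> arrn (k - a) (k - b).
Proof. move: ab; rewrite /arrn; lia. Qed.

Lemma arrn_subr k : ~~ odd k -> arrn (a - k) (b - k).
Proof. move: ab; rewrite /arrn; lia. Qed.

Lemma arrn_bdist k : ~~ odd k -> arrn (minn a (k - a)) (minn b (k - b)).
Proof. move: ab; rewrite /arrn; lia. Qed.

End ArrowsOnNat.

Section Retraction.

Variables (m n : nat) (i : 'I_n) (eps : bool).

Definition c2mn (x : nat) := minn (x - 2 * m) (2 * m).

(* [2m - min(dist(x, {0, 6m}), 2m)]; it vanishes on [2m, 4m], where c2mn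
   varies. *)
Definition prox (x : nat) := 2 * m - minn x (6 * m - x).

Lemma even_2m : ~~ odd (2 * m).
Proof. by rewrite oddM. Qed.

Lemma even_6m : ~~ odd (6 * m).
Proof. by rewrite oddM. Qed.

Lemma c2mE (x : 'I_(6 * m).+1) : c2m x = inord (c2mn x).
Proof. by []. Qed.

Lemma c2mn_le x : c2mn x <= 2 * m.
Proof. exact: geq_minr. Qed.

Lemma arrn_c2mn x y : arrn x y -> arrn (c2mn x) (c2mn y).
Proof. by move=> xy; apply/arrn_minl/arrn_subr/even_2m. Qed.

Lemma arrn_prox x y : arrn x y -> arrn (prox x) (prox y).
Proof. by move=> xy; apply/arrn_subl/even_2m/arrn_bdist/even_6m. Qed.

Lemma c2mn_lo x : x <= 2 * m -> c2mn x = 0.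
Proof. by move=> x2m; rewrite /c2mn (eqP x2m) min0n. Qed.

Lemma c2mn_hi x : 4 * m <= x -> c2mn x = 2 * m.
Proof. by move=> x4m; apply/minn_idPr; lia. Qed.

Lemma prox_mid x : 2 * m <= x <= 4 * m -> prox x = 0.
Proof. by move=> /andP[xl xh]; apply/eqP; rewrite subn_eq0; lia. Qed.

Lemma prox_lt_mid x : 0 < prox x -> x < 2 * m \/ 4 * m < x.
Proof. rewrite /prox; lia. Qed.

Lemma prox_bnd x : (x = 0 \/ x = 6 * m) -> prox x = 2 * m.
Proof. by case=> ->; rewrite /prox ?subn0 ?subnn ?minn0 ?min0n subn0. Qed.

Lemma arrn_dist x y : arrn x y -> y <= x.+1 /\ x <= y.+1.
Proof. rewrite /arrn; lia. Qed.

(* Along an arrow x -> y, either both ends lie on one side of [2m, 4m], where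
   c2mn is constant, or both lie in [2m, 4m], where prox vanishes. *)
Lemma arrn_c2mn_or_prox x y : arrn x y -> c2mn x = c2mn y \/ prox x = prox y.
Proof.
move=> /arrn_dist [yx xy].
have [[xl yl] | [[xh yh] | [/prox_mid -> /prox_mid ->]]] :
    x <= 2 * m /\ y <= 2 * m \/ 4 * m <= x /\ 4 * m <= y
    \/ 2 * m <= x <= 4 * m /\ 2 * m <= y <= 4 * m by lia.
- by left; rewrite !c2mn_lo.
- by left; rewrite !c2mn_hi.
by right.
Qed.

Lemma arrI_c2m (x y : 'I_(6 * m).+1) : arrI x y -> arrI (c2m x) (c2m y).
Proof. by move=> xy; apply: arrI_inord; rewrite ?c2mn_le ?arrn_c2mn. Qed.

Definition bprox (v : vertI (6 * m) n) := \max_(l | l != i) prox (v l).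

Lemma bprox_le v : bprox v <= 2 * m.
Proof. by apply/bigmax_leqP => l _; apply: leq_subr. Qed.

Lemma bprox_eq (v w : vertI (6 * m) n) :
  (forall l, l != i -> prox (v l) = prox (w l)) -> bprox v = bprox w.
Proof. exact: eq_bigr. Qed.

Lemma arrn_bprox (v w : vertI (6 * m) n) j :
  j != i -> (forall l, l != j -> v l = w l) ->
  arrn (prox (v j)) (prox (w j)) -> arrn (bprox v) (bprox w).
Proof.
move=> ji vw pj; rewrite /bprox !(bigD1 j ji) /=.
rewrite (eq_bigr (fun l => prox (w l))) => [|l /andP[_ lj]]; last by rewrite vw.
exact: arrn_maxl.
Qed.

Definition phi (x p : nat) :=
  if eps then minn (c2mn x) p else maxn (c2mn x) (2 * m - p).

Lemma phi_le x p : phi x p <= 2 * m.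
Proof. by rewrite /phi; case: eps; have := c2mn_le x; lia. Qed.

Lemma phi_full x : phi x (2 * m) = c2mn x.
Proof. by rewrite /phi subnn maxn0; case: eps => //; apply/minn_idPl/c2mn_le. Qed.

Lemma phi_zero x : phi x 0 = if eps then 0 else 2 * m.
Proof. by rewrite /phi subn0 minn0; case: eps => //; apply/maxn_idPr/c2mn_le. Qed.

Lemma arrn_phil x y p : arrn x y -> arrn (phi x p) (phi y p).
Proof.
by move=> /arrn_c2mn xy; rewrite /phi; case: eps; [apply: arrn_minl | apply: arrn_maxl].
Qed.

Lemma arrn_phir x p q : arrn p q -> arrn (phi x p) (phi x q).
Proof.
move=> pq; rewrite /phi; case: eps; first exact: arrn_minr.
by apply/arrn_maxr/arrn_subl/even_2m.
Qed.

Definition retr (v : vertI (6 * m) n) : vertI (2 * m) n :=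
  [ffun l => if l == i then inord (phi (v i) (bprox v)) else c2m (v l)].

Lemma retr_inSqcap v : inSqcap i eps (retr v).
Proof.
have [j /andP[ji near] | far] := pickP (fun l => (l != i) && (0 < prox (v l))).
  left; exists j; split => //.
  rewrite ffunE (negbTE ji) c2mE inordK ?ltnS ?c2mn_le //.
  by case: (prox_lt_mid near) => [/ltnW/c2mn_lo | /ltnW/c2mn_hi] ->; [left | right].
have bprox0 : bprox v = 0.
  apply/eqP; rewrite -leqn0; apply/bigmax_leqP => l li.
  by move: (far l); rewrite li /= => /negbT; rewrite -leqNgt.
by right; rewrite ffunE eqxx inordK ?ltnS ?phi_le // bprox0 phi_zero.
Qed.

Lemma retr_c2m v : inSqcap i eps v -> retr v = c2mBox v.
Proof.
move=> vsq; apply/ffunP => l; rewrite !ffunE; case: eqP => [->|//].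
apply: val_inj; rewrite c2mE /= !inordK ?ltnS ?phi_le ?c2mn_le //.
case: vsq => [[j [ji /prox_bnd vj]] | vi].
  suff -> : bprox v = 2 * m by rewrite phi_full.
  by apply/eqP; rewrite eqn_leq bprox_le -vj leq_bigmax_cond.
rewrite /phi vi; case: eps; first by rewrite c2mn_lo ?min0n.
by rewrite c2mn_hi ?leq_mul2r ?orbT //; apply/maxn_idPl/leq_subr.
Qed.

Lemma arrBox_retr_bprox (v w : vertI (6 * m) n) j :
  (forall l, l != j -> v l = w l) ->
  arrI (v j) (w j) -> bprox v = bprox w -> arrBox (retr v) (retr w).
Proof.
move=> vw vwj bvw; exists j; split.
  move=> l lj; rewrite !ffunE bvw; case: eqP => [li|_]; last by rewrite vw.
  by rewrite -li vw.
rewrite !ffunE; case: eqP => [ji|_]; last exact: arrI_c2m.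
rewrite -bvw -ji; apply: arrI_inord; rewrite ?phi_le //.
exact: arrn_phil.
Qed.

Lemma arrBox_retr_c2mn (v w : vertI (6 * m) n) j :
  j != i -> (forall l, l != j -> v l = w l) ->
  arrI (v j) (w j) -> c2mn (v j) = c2mn (w j) -> arrBox (retr v) (retr w).
Proof.
move=> ji vw vwj cvw; exists i; split.
  move=> l li; rewrite !ffunE (negbTE li) !c2mE.
  by case: (eqVneq l j) => [->|lj]; rewrite ?cvw ?vw.
rewrite !ffunE eqxx (vw i); last by rewrite eq_sym.
apply: arrI_inord; rewrite ?phi_le // arrn_phir //.
exact: (arrn_bprox ji vw (arrn_prox vwj)).
Qed.

Lemma arrBox_retr (v w : vertI (6 * m) n) :
  arrBox v w -> arrBox (retr v) (retr w).
Proof.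
case=> j [vw vwj]; case: (eqVneq j i) => [ji | ji].
  apply: (arrBox_retr_bprox vw vwj); apply: bprox_eq => l li.
  by rewrite vw // ji.
case: (arrn_c2mn_or_prox vwj) => [cvw | pvw].
  exact: (arrBox_retr_c2mn ji vw vwj cvw).
apply: (arrBox_retr_bprox vw vwj); apply: bprox_eq => l _.
by case: (eqVneq l j) => [->|lj]; [exact: pvw | rewrite vw].
Qed.

End Retraction.

Theorem mainTheorem10 (m n : nat) (hn : 0 < n) (i : 'I_n) (eps : bool) :
  exists Phi : vertI (6 * m) n -> vertI (2 * m) n,
    (forall v, inSqcap i eps (Phi v)) /\
    (forall v w, arrBox v w -> arrBox (Phi v) (Phi w)) /\
    (forall v, inSqcap i eps v -> Phi v = @c2mBox m n v).
Proof.
exists (@retr m n i eps); split; first exact: retr_inSqcap.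
by split; [exact: arrBox_retr | exact: retr_c2m].
Qed.
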